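(* Let $F_1,F_2,F$ be full-dimensional tree topologies on $[N]$ with $F\in C(F_1,F_2)$. Then every equivalence class $C$ of 2-element subsets of $[N]$ with respect to $=_F$ is contained in a single equivalence class with respect to $=_{F_1}$ or in a single equivalence class with respect to $=_{F_2}$.
   Context: A tree topology $F$ on $[N]$ is a collection of subsets $S\subseteq[N]$ (clades) with $2\le|S|\le N-1$, pairwise either strictly nested or disjoint; it is full dimensional if $|F|=N-2$. For a 2-element subset $p\subseteq[N]$, $\mathrm{cl}_F(p)$ is the intersection of all $S\in F$ containing $p$ (or $[N]$ if none), and $p=_Fq$ iff $\mathrm{cl}_F(p)=\mathrm{cl}_F(q)$. $ut(F)\subseteq\mathbb{R}^{\binom N2}$ is the set of tree metric vectors ($w_{\{i,j\}}=$ path length between leaves $i,j$) of equidistant rooted phylogenetic trees (positive edge lengths, all leaves equidistant from the root) with tree topology $F$ (the set of leaf sets below internal edges). $C(F_1,F_2)$ is the set of tree topologies $F$ for which there exist $w^1\in ut(F_1)$ and $w^2\in ut(F_2)$ with $w^1\boxplus w^2\in ut(F)$, where $(w^1\boxplus w^2)_p=\max(w^1_p,w^2_p)$. *)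

From HB Require Import structures.
From mathcomp Require Import all_boot all_order all_algebra.
Set Implicit Arguments. Unset Strict Implicit. Unset Printing Implicit Defensive.
Import Order.TTheory GRing.Theory Num.Theory.
Local Open Scope ring_scope.

Definition tree_topology (N : nat) (F : {set {set 'I_N}}) : Prop :=
  (forall S, S \in F -> 2 <= #|S| <= N.-1)%N /\
  (forall S T, S \in F -> T \in F -> S != T ->
     S \proper T \/ T \proper S \/ [disjoint S & T]).

Definition full_dimensional (N : nat) (F : {set {set 'I_N}}) : Prop :=
  #|F| = (N - 2)%N.

Definition is_pair (N : nat) (p : {set 'I_N}) : Prop := #|p| = 2%N.

(* cl_F(p): intersection of all clades containing p ([N] if none). *)
Definition cl (N : nat) (F : {set {set 'I_N}}) (p : {set 'I_N}) : {set 'I_N} :=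
  \bigcap_(S in F | p \subset S) S.

(* Edges of the rooted tree with topology F, indexed by the leaf set below
   them: the clades of F (internal edges) and the singletons (leaf edges);
   the root [N] has no edge above it. *)
Definition tree_edges (N : nat) (F : {set {set 'I_N}}) : {set {set 'I_N}} :=
  (F :|: [set [set i] | i : 'I_N]) :\ setT.

(* ut(F): tree metric vectors (indexed by 2-element subsets) of equidistant
   rooted phylogenetic trees with topology F and positive edge lengths l.
   The path between leaves i,j uses exactly the edges whose leaf set
   contains exactly one of i, j. *)
Definition ut (R : realFieldType) (N : nat) (F : {set {set 'I_N}})
    (w : {set 'I_N} -> R) : Prop :=
  exists l : {set 'I_N} -> R,
    (forall S, S \in tree_edges F -> 0 < l S) /\
    (exists h : R, forall i : 'I_N,
        \sum_(S in tree_edges F | i \in S) l S = h) /\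
    (forall p, is_pair p ->
        w p = \sum_(S in tree_edges F | #|S :&: p| == 1%N) l S).

Definition tmax (R : realFieldType) (N : nat) (w1 w2 : {set 'I_N} -> R) :
  {set 'I_N} -> R := fun p => Num.max (w1 p) (w2 p).

Definition inC (R : realFieldType) (N : nat) (F1 F2 F : {set {set 'I_N}}) : Prop :=
  tree_topology F /\
  exists w1 w2 : {set 'I_N} -> R, ut F1 w1 /\ ut F2 w2 /\ ut F (tmax w1 w2).

From HB Require Import structures.
From mathcomp Require Import all_boot all_order all_algebra.
From mathcomp Require Import zify lra.
Set Implicit Arguments. Unset Strict Implicit. Unset Printing Implicit Defensive.
Import Order.TTheory GRing.Theory Num.Theory.

(* An equidistant tree metric with topology G reads w {x,y} = c - 2 * depth {x,y}, where
   depth sums the edge lengths of the clades of G containing {x,y}; so in G, deeper pairs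
   are closer and the clade sets of the three pairs of a triple are ultrametrically
   related.  Let w = max w1 w2 agree with w1 on p.  On the =_F class of p, w is constant,
   equal to w1 p, and w1 <= w everywhere.  As F is full dimensional, the node cl_F(p) is
   binary (three children would let us add a clade, exceeding the bound N - 1 on laminar
   families of non-singletons), so the class consists of the pairs with one leaf on each
   side.  Replacing {x,y} by {x,z}, with y and z on the same side, {y,z} is strictly deeper
   in F, hence w1 {y,z} <= w {y,z} < w1 {x,y} while w1 {x,z} <= w1 {x,y}; the ultrametric
   comparison in F1 then forces {x,z} to have the clades of {x,y}.  Moving one leaf at a
   time reaches every pair of the class. *)

Definition nested_or_disjoint (N : nat) (S T : {set 'I_N}) : Prop :=
  S \proper T \/ T \proper S \/ [disjoint S & T].

Definition laminar (N : nat) (L : {set {set 'I_N}}) : Prop :=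
  forall S T, S \in L -> T \in L -> S != T -> nested_or_disjoint S T.

Lemma nested_or_disjoint_sym (N : nat) (S T : {set 'I_N}) :
  nested_or_disjoint S T -> nested_or_disjoint T S.
Proof. by case=> [|[|]]; [right; left | left | right; right; rewrite disjoint_sym]. Qed.

Lemma setT_nested_or_disjoint (N : nat) (S : {set 'I_N}) :
  S != setT -> nested_or_disjoint setT S.
Proof. by right; left; rewrite properT. Qed.

Lemma laminarU1 (N : nat) (L : {set {set 'I_N}}) K :
  laminar L -> (forall S, S \in L -> S != K -> nested_or_disjoint K S) ->
  laminar (K |: L).
Proof.
move=> lamL lamK S T; rewrite !in_setU1.
case/predU1P=> [->|SL]; case/predU1P=> [->|TL]; rewrite ?eqxx // => neST.
- by apply: lamK; rewrite // eq_sym.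
- exact/nested_or_disjoint_sym/lamK.
- exact: lamL.
Qed.

Section LaminarCard.
Variables (n : nat) (L : {set {set 'I_n.+1}}).
Hypotheses (lamL : laminar L) (szL : forall S, S \in L -> 1 < #|S|).

Definition top (S : {set 'I_n.+1}) : 'I_n.+1 := inord (\max_(i in S) val i).

Lemma topP S : S != set0 -> top S \in S /\ forall j, j \in S -> j <= top S.
Proof.
rewrite -card_gt0 => /(@eq_bigmax_cond _ (mem S) val) [k kS kmax].
rewrite /top kmax inord_val; split=> // j jS.
by rewrite -kmax (leq_bigmax_cond _ jS).
Qed.

Lemma clade_top S : S \in L -> top S \in S /\ forall j, j \in S -> j <= top S.
Proof. by move=> SL; apply: topP; rewrite -card_gt0 ltnW ?szL. Qed.

Definition top_children (S : {set 'I_n.+1}) := [set T in L | (T \proper S) && (top S \in T)].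

Definition top_branch (S : {set 'I_n.+1}) := top S |: \bigcup_(T in top_children S) T.

(* Seeing [L] as the internal nodes of a forest on the leaves, [top_branch S] is the child
   of [S] through its largest leaf [top S]; the largest leaf outside that child is an
   injective label of [S] that is smaller than [top S], hence never [ord_max]. *)
Definition label (S : {set 'I_n.+1}) := top (S :\: top_branch S).

Lemma top_children_sub (S T : {set 'I_n.+1}) : T \in top_children S -> T \subset top_branch S.
Proof. by move=> TS; rewrite subsetU // (bigcup_sup T TS) orbT. Qed.

Lemma setD_top_branch_neq0 S : S \in L -> S :\: top_branch S != set0.
Proof.
move=> SL; have [topS _] := clade_top SL.
rewrite setD_eq0; apply/negP => sSB.
case: (set_0Vmem (top_children S)) => [C0|[T0 T0C]].
  have := subset_leq_card sSB.
  by rewrite /top_branch C0 big_set0 setU0 cards1 leqNgt szL.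
pose T := [arg max_(T > T0 in top_children S) #|T|].
have [TC Tmax] : T \in top_children S /\
    forall T', T' \in top_children S -> #|T'| <= #|T|.
  by rewrite /T; case: arg_maxnP.
move: (TC); rewrite inE => /and3P [TL TS topT].
have sBT : top_branch S \subset T.
  rewrite subUset sub1set topT; apply/bigcupsP => T' T'C.
  move: (T'C); rewrite inE => /and3P [T'L _ topT'].
  have [->//|neT'T] := eqVneq T' T.
  case: (lamL T'L TL neT'T) => [/proper_sub //|[TT'|dis]].
    by have := Tmax _ T'C; rewrite leqNgt proper_card.
  by rewrite (disjointFr dis topT') in topT.
by have := sub_proper_trans (subset_trans sSB sBT) TS; rewrite properE subxx.
Qed.

Lemma labelP S : S \in L ->
  [/\ label S \in S, label S \notin top_branch S &
      forall j, j \in S -> j \notin top_branch S -> j <= label S].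
Proof.
move=> SL; have [] := topP (setD_top_branch_neq0 SL).
rewrite -/(label S) inE => /andP [lB lS] lmax; split=> // j jS jB.
by apply: lmax; rewrite inE jB.
Qed.

Lemma label_lt S : S \in L -> label S < n.
Proof.
move=> SL; have [lS lB _] := labelP SL; have [_ topmax] := clade_top SL.
have lt_top : label S < top S.
  rewrite ltn_neqAle topmax // andbT; apply: contraNneq lB => /val_inj ->.
  exact: setU11.
by rewrite -ltnS (leq_ltn_trans lt_top (ltn_ord _)).
Qed.

Lemma label_neq_proper S S' : S \in L -> S' \in L -> S \proper S' ->
  label S != label S'.
Proof.
move=> SL S'L SS'; apply/eqP => eq_label.
have [lS lB lmax] := labelP SL; have [_ lB' lmax'] := labelP S'L.
have [topS topmax] := clade_top SL.
have [topS'S|topS'NS] := boolP (top S' \in S).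
  have : S \in top_children S' by rewrite inE SL SS' topS'S.
  by move/top_children_sub/subsetP/(_ _ lS); rewrite eq_label (negbTE lB').
have topSS' : top S \in S' := subsetP (proper_sub SS') _ topS.
have [topSB'|topSNB'] := boolP (top S \in top_branch S').
  move: topSB'; rewrite in_setU1 => /predU1P [eq_top|].
    by rewrite -eq_top topS in topS'NS.
  case/bigcupP=> T TC topST; move: (TC); rewrite inE => /and3P [TL _ topS'T].
  have neST : S != T by apply: contraNneq topS'NS => ->.
  case: (lamL SL TL neST) => [/proper_sub/subsetP/(_ _ lS) lT|[TS|dis]].
  - by move: lB'; rewrite -eq_label (subsetP (top_children_sub TC)).
  - by rewrite (subsetP (proper_sub TS) _ topS'T) in topS'NS.
  - by rewrite (disjointFr dis topS) in topST.
have eq_top : label S = top S.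
  by apply/val_inj/eqP; rewrite eqn_leq topmax // eq_label lmax'.
by rewrite eq_top setU11 in lB.
Qed.

Lemma label_inj : {in L &, injective label}.
Proof.
move=> S S' SL S'L eq_label; have [//|neSS'] := eqVneq S S'.
case: (lamL SL S'L neSS') => [SS'|[S'S|dis]].
- by have := label_neq_proper SL S'L SS'; rewrite eq_label eqxx.
- by have := label_neq_proper S'L SL S'S; rewrite eq_label eqxx.
- have [lS _ _] := labelP SL; have [lS' _ _] := labelP S'L.
  by rewrite eq_label in lS; rewrite (disjointFr dis lS) in lS'.
Qed.

Lemma card_laminar_le : #|L| <= n.
Proof.
have cardC : #|[set~ (ord_max : 'I_n.+1)]| = n by rewrite cardsC1 card_ord.
rewrite -(card_in_imset label_inj) -[X in _ <= X]cardC.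
apply/subset_leq_card/subsetP => _ /imsetP [S SL ->]; rewrite !inE.
by apply: contraTneq (label_lt SL) => ->; rewrite ltnn.
Qed.

End LaminarCard.

Lemma laminar_card_le (N : nat) (L : {set {set 'I_N}}) :
  laminar L -> (forall S, S \in L -> 1 < #|S|) -> #|L| <= N.-1.
Proof.
case: N L => [|n] L lamL szL; last exact: card_laminar_le.
rewrite leqn0 cards_eq0; apply/eqP/setP => S; rewrite inE.
by apply/negbTE/negP => /szL; rewrite ltnNge (leq_trans (max_card S)) ?card_ord.
Qed.

Lemma tree_topology_laminar (N : nat) (F : {set {set 'I_N}}) :
  tree_topology F -> laminar F.
Proof. by case. Qed.

Lemma clade_neqT (N : nat) (F : {set {set 'I_N}}) (S : {set 'I_N}) :
  tree_topology F -> S \in F -> S != setT.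
Proof.
case=> szF _ SF; apply: contraTneq (szF _ SF) => ->.
by rewrite cardsT card_ord; case: N {F S SF szF} => [|n]; rewrite //= ltnn andbF.
Qed.

Lemma is_pair2 (N : nat) (x y : 'I_N) : x != y -> is_pair [set x; y].
Proof. by rewrite /is_pair cards2 => ->. Qed.

Definition clades_of (N : nat) (G : {set {set 'I_N}}) (q : {set 'I_N}) :=
  [set S in G | q \subset S].

Lemma in_clades_of2 (N : nat) (G : {set {set 'I_N}}) (x y : 'I_N) (S : {set 'I_N}) :
  (S \in clades_of G [set x; y]) = [&& S \in G, x \in S & y \in S].
Proof. by rewrite inE subUset !sub1set. Qed.

Lemma sub_cl (N : nat) (G : {set {set 'I_N}}) (q : {set 'I_N}) : q \subset cl G q.
Proof. by apply/bigcapsP => S /andP []. Qed.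

Lemma in_clades_of (N : nat) (G : {set {set 'I_N}}) (q S : {set 'I_N}) :
  (S \in clades_of G q) = (S \in G) && (cl G q \subset S).
Proof.
rewrite inE; case SG: (S \in G) => //=; apply/idP/idP => [qS|].
  by apply: bigcap_inf; rewrite SG.
exact: subset_trans (sub_cl G q).
Qed.

Lemma cl_eq_clades_of (N : nat) (G : {set {set 'I_N}}) (q q' : {set 'I_N}) :
  cl G q = cl G q' <-> clades_of G q = clades_of G q'.
Proof.
split=> [eq_cl|eq_clades].
  by apply/setP => S; rewrite !in_clades_of eq_cl.
have clE r : cl G r = \bigcap_(S in clades_of G r) S.
  by apply: eq_bigl => S; rewrite inE.
by rewrite !clE eq_clades.
Qed.

Lemma clades_of_ultra (N : nat) (G : {set {set 'I_N}}) (x y z : 'I_N) :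
  laminar G ->
  clades_of G [set x; z] \subset clades_of G [set x; y] \/
  clades_of G [set y; z] \subset clades_of G [set x; y].
Proof.
move=> lamG; have [|] := boolP (_ \subset _); first by left.
move=> /subsetPn [S1]; rewrite !in_clades_of2 => /and3P [S1G xS1 zS1].
rewrite S1G xS1 /= => yNS1.
have [|] := boolP (_ \subset _); first by right.
move=> /subsetPn [S2]; rewrite !in_clades_of2 => /and3P [S2G yS2 zS2].
rewrite S2G yS2 /= andbT => xNS2.
have neS12 : S1 != S2 by apply: contraNneq xNS2 => <-.
case: (lamG _ _ S1G S2G neS12)
  => [/proper_sub/subsetP/(_ _ xS1)|[/proper_sub/subsetP/(_ _ yS2)|dis]].
- by rewrite (negbTE xNS2).
- by rewrite (negbTE yNS1).
- by rewrite (disjointFr dis zS1) in zS2.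
Qed.

Lemma class_mem_cl (N : nat) (F : {set {set 'I_N}}) (p : {set 'I_N}) (x y : 'I_N) :
  clades_of F [set x; y] = clades_of F p -> x \in cl F p /\ y \in cl F p.
Proof.
move/cl_eq_clades_of => eq_cl; have := sub_cl F [set x; y].
by rewrite eq_cl subUset !sub1set => /andP.
Qed.

Lemma clades_of_cl_sub (N : nat) (F : {set {set 'I_N}}) (p q : {set 'I_N}) :
  q \subset cl F p -> clades_of F p \subset clades_of F q.
Proof.
move=> qp; apply/subsetP => S; rewrite in_clades_of inE => /andP [-> pS] /=.
exact: subset_trans qp pS.
Qed.

Section Classes.
Variables (N : nat) (F : {set {set 'I_N}}) (p : {set 'I_N}).
Hypothesis lamF : laminar F.

Lemma class_subset_clade (x y : 'I_N) (S : {set 'I_N}) :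
  clades_of F [set x; y] = clades_of F p -> S \in F -> x \in S -> y \in S ->
  p \subset S.
Proof.
move=> Cxy SF xS yS; have : S \in clades_of F [set x; y] by rewrite in_clades_of2 SF xS yS.
by rewrite Cxy inE => /andP [].
Qed.

Lemma class_pairs_with (x y z : 'I_N) :
  clades_of F [set x; y] = clades_of F p -> z \in cl F p ->
  clades_of F [set x; z] = clades_of F p \/ clades_of F [set y; z] = clades_of F p.
Proof.
move=> Cxy zp; have [xp yp] := class_mem_cl Cxy.
have separating_clade u : u \in cl F p -> clades_of F [set u; z] != clades_of F p ->
    exists2 S, S \in F & [/\ u \in S, z \in S & ~~ (p \subset S)].
  move=> up neq; have /subsetPn [S] : ~~ (clades_of F [set u; z] \subset clades_of F p).
    apply: contra neq => sub; rewrite eqEsubset sub clades_of_cl_sub //.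
    by rewrite subUset !sub1set up zp.
  rewrite in_clades_of2 inE => /and3P [SF uS zS]; rewrite SF /= => pS.
  by exists S.
have [|/(separating_clade x xp) [S1 S1F [xS1 zS1 pS1]]] :=
  eqVneq (clades_of F [set x; z]) (clades_of F p); first by left.
have [|/(separating_clade y yp) [S2 S2F [yS2 zS2 pS2]]] :=
  eqVneq (clades_of F [set y; z]) (clades_of F p); first by right.
have neS12 : S1 != S2.
  by apply: contraNneq pS1 => eqS; rewrite (class_subset_clade Cxy) // eqS.
case: (lamF S1F S2F neS12)
  => [/proper_sub/subsetP/(_ _ xS1) xS2|[/proper_sub/subsetP/(_ _ yS2) yS1|dis]].
- by rewrite (class_subset_clade Cxy) in pS2.
- by rewrite (class_subset_clade Cxy) in pS1.
- by rewrite (disjointFr dis zS1) in zS2.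
Qed.

(* For [v] in [cl F p], the child of the node [cl F p] containing [v]: the union of the
   clades through [v] that miss part of [p], or just [[set v]]. *)
Definition branch (v : 'I_N) : {set 'I_N} :=
  v |: \bigcup_(S in F | (v \in S) && ~~ (p \subset S)) S.

Lemma branch_sub (v : 'I_N) (S : {set 'I_N}) :
  v \in cl F p -> S \in F -> p \subset S -> branch v \subset S.
Proof.
move=> vp SF pS; have vS : v \in S by apply: (subsetP (bigcap_inf S _) _ vp); rewrite SF.
rewrite subUset sub1set vS; apply/bigcupsP => T /andP [TF /andP [vT pT]].
have neTS : T != S by apply: contraNneq pT => ->.
case: (lamF TF SF neTS) => [/proper_sub //|[/proper_sub ST|dis]].
  by rewrite (subset_trans pS ST) in pT.
by rewrite (disjointFr dis vT) in vS.
Qed.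

Lemma branch_meet (v u : 'I_N) (S : {set 'I_N}) :
  S \in F -> ~~ (p \subset S) -> u \in S -> u \in branch v -> S \subset branch v.
Proof.
move=> SF pS uS; have [vS _|vNS] := boolP (v \in S).
  by rewrite subsetU // (bigcup_sup S) ?SF ?vS ?orbT.
rewrite in_setU1 => /predU1P [uv|/bigcupP [T /andP [TF /andP [vT pT]] uT]].
  by rewrite -uv uS in vNS.
have neST : S != T by apply: contraNneq vNS => ->.
case: (lamF SF TF neST) => [/proper_sub ST|[/proper_sub/subsetP/(_ _ vT) vS|dis]].
- by rewrite (subset_trans ST) // subsetU // (bigcup_sup T) ?TF ?vT ?orbT.
- by rewrite vS in vNS.
- by rewrite (disjointFr dis uS) in uT.
Qed.

Lemma notin_branch (v z : 'I_N) :
  v != z -> clades_of F [set v; z] = clades_of F p -> z \notin branch v.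
Proof.
move=> vz Cvz; rewrite in_setU1 eq_sym (negbTE vz) /=.
apply/bigcupP => [[S /andP [SF /andP [vS pS]] zS]].
by rewrite (class_subset_clade Cvz) in pS.
Qed.

Lemma branchU_nested_or_disjoint (x y : 'I_N) (S : {set 'I_N}) :
  x \in cl F p -> y \in cl F p -> S \in F -> S != branch x :|: branch y ->
  nested_or_disjoint (branch x :|: branch y) S.
Proof.
move=> xp yp SF neS; have [pS|pNS] := boolP (p \subset S).
  by left; rewrite properEneq eq_sym neS subUset !branch_sub.
have [dis|/set0Pn [u]] := eqVneq (S :&: (branch x :|: branch y)) set0.
  by right; right; rewrite -setI_eq0 setIC dis.
rewrite in_setI in_setU => /andP [uS /orP [] uB]; right; left; rewrite properEneq neS /=.
- by rewrite subsetU // (branch_meet SF pNS uS uB).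
- by rewrite subsetU // (branch_meet SF pNS uS uB) orbT.
Qed.

End Classes.

(* Three leaves pairwise in one class lie below three different children of the node
   [cl F p]; the union [K] of the children through [x] and [y] is compatible with every
   clade, so [F] together with [K] and [setT] would be a laminar family of [N]
   non-singleton sets, one too many. *)
Lemma class_no_triangle (N : nat) (F : {set {set 'I_N}}) (p : {set 'I_N}) (x y z : 'I_N) :
  tree_topology F -> full_dimensional F -> is_pair p ->
  x != y -> x != z -> y != z ->
  clades_of F [set x; y] = clades_of F p -> clades_of F [set x; z] = clades_of F p ->
  clades_of F [set y; z] = clades_of F p -> False.
Proof.
move=> tF fdF pp xy xz yz Cxy Cxz Cyz; have lamF := tree_topology_laminar tF.
have [xp yp] := class_mem_cl Cxy; have [_ zp] := class_mem_cl Cxz.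
pose K := branch F p x :|: branch F p y.
have xK : x \in K by rewrite !inE eqxx.
have yK : y \in K by rewrite !inE eqxx orbT.
have zNK : z \notin K by rewrite in_setU negb_or !notin_branch.
have KNF : K \notin F.
  apply: contra zNK => KF; apply: subsetP zp.
  by apply: bigcap_inf; rewrite KF (class_subset_clade Cxy).
have KNT : K != setT by apply: contraNneq zNK => ->; rewrite inE.
pose F' := setT |: (K |: F).
have lamF' : laminar F'.
  apply: laminarU1; last first.
    move=> S; rewrite in_setU1 => /predU1P [-> _|SF _]; apply: setT_nested_or_disjoint => //.
    exact: clade_neqT tF SF.
  by apply: laminarU1 => // S SF neS; apply: branchU_nested_or_disjoint; rewrite // eq_sym.
have N_ge2 : 1 < N by have := max_card p; rewrite pp card_ord.
have szF' S : S \in F' -> 1 < #|S|.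
  rewrite !in_setU1 => /predU1P [->|/predU1P [->|SF]].
  - by rewrite cardsT card_ord.
  - have := subset_leq_card (_ : [set x; y] \subset K).
    by rewrite cards2 xy subUset !sub1set xK yK => /(_ isT).
  - by case/andP: (tF.1 _ SF).
have := laminar_card_le lamF' szF'.
have TNF : setT \notin F by apply/negP => /(clade_neqT tF); rewrite eqxx.
rewrite !cardsU1 !inE KNF eq_sym (negbTE KNT) (negbTE TNF) fdF.
lia.
Qed.

Lemma cardsI2 (N : nat) (S : {set 'I_N}) (x y : 'I_N) : x != y ->
  #|S :&: [set x; y]| = (x \in S) + (y \in S).
Proof.
move=> xy; rewrite setIC -sum1_card.
under eq_bigl do rewrite inE.
by rewrite big_mkcondr /= big_setU1 ?big_set1 ?inE.
Qed.

Local Open Scope ring_scope.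

Definition depth (R : realFieldType) (N : nat) (G : {set {set 'I_N}})
    (l : {set 'I_N} -> R) (q : {set 'I_N}) : R :=
  \sum_(S in clades_of G q) l S.

Section Depth.
Variables (R : realFieldType) (N : nat) (G : {set {set 'I_N}}) (l : {set 'I_N} -> R).
Hypothesis l_gt0 : forall S, S \in G -> 0 < l S.

Lemma depth_le (q q' : {set 'I_N}) :
  clades_of G q \subset clades_of G q' -> depth G l q <= depth G l q'.
Proof.
move=> sqq'; rewrite /depth [leRHS](big_setID (clades_of G q)) /= (setIidPr sqq') lerDl.
by apply: sumr_ge0 => S; rewrite !inE => /and3P [_ /l_gt0/ltW].
Qed.

Lemma depth_lt (q q' : {set 'I_N}) :
  clades_of G q \proper clades_of G q' -> depth G l q < depth G l q'.
Proof.
case/properP=> sqq' [S Sq' Sq].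
rewrite /depth [ltRHS](big_setID (clades_of G q)) /= (setIidPr sqq') ltrDl.
rewrite (bigD1 S) /=; last by rewrite inE Sq.
move: Sq'; rewrite inE => /andP [/l_gt0 lS _]; apply: ltr_pwDl lS _.
by apply: sumr_ge0 => T /andP [+ _]; rewrite !inE => /and3P [_ /l_gt0/ltW].
Qed.

End Depth.

Lemma ut_dist (R : realFieldType) (N : nat) (G : {set {set 'I_N}}) (w : {set 'I_N} -> R) :
  tree_topology G -> ut G w ->
  exists (l : {set 'I_N} -> R) (c : R), (forall S, S \in G -> 0 < l S) /\
    forall x y : 'I_N, x != y -> w [set x; y] = c - 2 * depth G l [set x; y].
Proof.
move=> tG [l [l_gt0 [[h sum_h] w_sum]]]; exists l, (h + h); split.
  by move=> S SG; apply: l_gt0; rewrite !inE (clade_neqT tG SG) SG.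
move=> x y xy; rewrite w_sum; last exact: is_pair2.
have -> : depth G l [set x; y] = \sum_(S in tree_edges G | [set x; y] \subset S) l S.
  apply: eq_bigl => S; rewrite !inE.
  have [sxyS|] := boolP ([set x; y] \subset S); rewrite ?andbF ?andbT //.
  apply/idP/idP => [SG|/andP [_ /orP [//|/imsetP [i _ Si]]]].
    by rewrite (clade_neqT tG SG) SG.
  by have := subset_leq_card sxyS; rewrite Si cards1 cards2 xy.
apply/eqP; rewrite eq_sym subr_eq -{1}(sum_h x) -(sum_h y) mulr_sumr.
rewrite !big_mkcondr -!big_split /=; apply/eqP/eq_bigr => S _.
by rewrite cardsI2 // subUset !sub1set; case: (x \in S); case: (y \in S) => /=; lra.
Qed.

Section Transfer.
Variables (R : realFieldType) (N : nat) (F G : {set {set 'I_N}}).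
Variables (l lG : {set 'I_N} -> R) (a b : 'I_N).
Hypotheses (tF : tree_topology F) (fdF : full_dimensional F) (lamG : laminar G).
Hypotheses (l_gt0 : forall S, S \in F -> 0 < l S) (lG_gt0 : forall S, S \in G -> 0 < lG S).
Hypothesis ab : a != b.

Local Notation p := [set a; b].

(* [w_G <= w] with equality at [p], expressed through [depth] (see [ut_dist]). *)
Hypothesis depth_gap : forall x y : 'I_N, x != y ->
  depth F l [set x; y] - depth F l p <= depth G lG [set x; y] - depth G lG p.

(* In [G], [{y, z}] is strictly deeper than [p] and [{x, z}] at least as deep, so of the
   two cases of the ultrametric comparison only [clades_of G [set x; z] = clades_of G p]
   survives. *)
Lemma transfer_step (x y z : 'I_N) : x != y -> x != z ->
  clades_of F [set x; y] = clades_of F p -> clades_of F [set x; z] = clades_of F p ->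
  clades_of G [set x; y] = clades_of G p -> clades_of G [set x; z] = clades_of G p.
Proof.
move=> xy xz Fxy Fxz Gxy; have [<-//|yz] := eqVneq y z.
have [[_ yp] [_ zp]] := (class_mem_cl Fxy, class_mem_cl Fxz).
have Fyz : clades_of F p \proper clades_of F [set y; z].
  rewrite properEneq clades_of_cl_sub ?subUset ?sub1set ?yp ?zp // andbT.
  apply/eqP => Fyz.
  exact: (class_no_triangle tF fdF (is_pair2 ab) xy xz yz Fxy Fxz (esym Fyz)).
have dG_xy : depth G lG [set x; y] = depth G lG p by rewrite /depth Gxy.
have dG_yz : depth G lG p < depth G lG [set y; z].
  rewrite -subr_gt0 (lt_le_trans _ (depth_gap yz)) // subr_gt0.
  exact: (depth_lt l_gt0 Fyz).
have dG_xz : depth G lG p <= depth G lG [set x; z].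
  by rewrite -subr_ge0 (le_trans _ (depth_gap xz)) // /depth Fxz subrr.
case: (clades_of_ultra x y z lamG) => [|/(depth_le lG_gt0)]; last first.
  by rewrite dG_xy leNgt dG_yz.
by rewrite Gxy => /eqVproper [//|/(depth_lt lG_gt0)]; rewrite ltNge dG_xz.
Qed.

Lemma transfer_class (x y : 'I_N) : x != y ->
  clades_of F [set x; y] = clades_of F p -> clades_of G [set x; y] = clades_of G p.
Proof.
move=> xy Fxy; have [xp _] := class_mem_cl Fxy.
have via_end u v : u != v -> [set u; v] = p -> clades_of F [set u; x] = clades_of F p ->
    exists w, [/\ w != x, clades_of F [set w; x] = clades_of F p &
                          clades_of G [set w; x] = clades_of G p].
  move=> uv uvp Fux; have [<-|ux] := eqVneq u x.
    by exists v; split; [rewrite eq_sym | rewrite setUC uvp..].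
  by exists u; split=> //; apply: (transfer_step uv ux); rewrite ?uvp.
have [w [wx Fwx Gwx]] : exists w, [/\ w != x, clades_of F [set w; x] = clades_of F p &
                                               clades_of G [set w; x] = clades_of G p].
  case: (class_pairs_with (tree_topology_laminar tF) (erefl (clades_of F p)) xp).
    exact: via_end ab (erefl _).
  by apply: (via_end b a); rewrite 1?eq_sym // setUC.
rewrite setUC in Fwx Gwx; apply: (transfer_step _ xy Fwx Fxy Gwx).
by rewrite eq_sym.
Qed.

End Transfer.

Lemma class_of_dominated (R : realFieldType) (N : nat) (F G : {set {set 'I_N}})
    (w wG : {set 'I_N} -> R) (a b : 'I_N) :
  tree_topology F -> full_dimensional F -> tree_topology G -> ut F w -> ut G wG ->
  (forall q, is_pair q -> wG q <= w q) -> a != b -> wG [set a; b] = w [set a; b] ->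
  forall q, is_pair q -> cl F q = cl F [set a; b] -> cl G q = cl G [set a; b].
Proof.
move=> tF fdF tG uF uG le_w ab eq_w q /eqP/cards2P [x [y [xy ->]]] /cl_eq_clades_of Fxy.
have [l [c [l_gt0 w_depth]]] := ut_dist tF uF.
have [lG [cG [lG_gt0 wG_depth]]] := ut_dist tG uG.
apply/cl_eq_clades_of.
apply: (transfer_class tF fdF (tree_topology_laminar tG) l_gt0 lG_gt0 ab _ xy Fxy) => u v uv.
have := le_w _ (is_pair2 uv); move: eq_w; rewrite !w_depth // !wG_depth //; lra.
Qed.

Theorem mainTheorem17 (R : realFieldType) (N : nat)
    (F1 F2 F : {set {set 'I_N}}) :
  tree_topology F1 -> full_dimensional F1 ->
  tree_topology F2 -> full_dimensional F2 ->
  tree_topology F -> full_dimensional F ->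
  inC R F1 F2 F ->
  forall p : {set 'I_N}, is_pair p ->
    (exists p1 : {set 'I_N}, is_pair p1 /\
       forall q, is_pair q -> cl F q = cl F p -> cl F1 q = cl F1 p1) \/
    (exists p2 : {set 'I_N}, is_pair p2 /\
       forall q, is_pair q -> cl F q = cl F p -> cl F2 q = cl F2 p2).
Proof.
move=> tF1 _ tF2 _ tF fdF [_ [w1 [w2 [u1 [u2 u]]]]] p /eqP/cards2P [a [b [ab ->]]].
have le1 q : is_pair q -> w1 q <= tmax w1 w2 q by rewrite /tmax le_max lexx.
have le2 q : is_pair q -> w2 q <= tmax w1 w2 q by rewrite /tmax le_max lexx orbT.
case: (leP (w1 [set a; b]) (w2 [set a; b])) => [le12|/ltW le21].
- right; exists [set a; b]; split; first exact: is_pair2.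
  by apply: (class_of_dominated tF fdF tF2 u u2 le2 ab); rewrite /tmax max_r.
- left; exists [set a; b]; split; first exact: is_pair2.
  by apply: (class_of_dominated tF fdF tF1 u u1 le1 ab); rewrite /tmax max_l.
Qed.
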